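(* For every integer $n\geq 5$, $\dot{\imath}_{[1,2]}(P_5\Box P_n)=\left\lfloor \frac{6n+8}{5}\right\rfloor$.
   Context: $P_k$ denotes the path on $k$ vertices and $P_m\Box P_n$ the Cartesian product of two paths (the $m\times n$ grid graph). A set $S$ of vertices of a graph $G$ is independent if no two vertices of $S$ are adjacent, and dominating if every vertex not in $S$ has at least one neighbor in $S$. An independent $[1,2]$-set of $G$ is an independent dominating set $S$ such that every vertex $v\in V(G)\setminus S$ has at least one and at most two neighbors in $S$. When $G$ has an independent $[1,2]$-set, $\dot{\imath}_{[1,2]}(G)$ denotes the minimum cardinality of an independent $[1,2]$-set of $G$ (the statement includes the existence of such a set). *)

From mathcomp Require Import all_boot.
Set Implicit Arguments. Unset Strict Implicit. Unset Printing Implicit Defensive.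

Definition grid_adj (m n : nat) : rel ('I_m * 'I_n) :=
  fun u v =>
    ((u.1 == v.1) && ((u.2.+1 == v.2 :> nat) || (v.2.+1 == u.2 :> nat)))
    || ((u.2 == v.2) && ((u.1.+1 == v.1 :> nat) || (v.1.+1 == u.1 :> nat))).
Arguments grid_adj : clear implicits.

Definition independent (T : finType) (adj : rel T) (S : {set T}) : bool :=
  [forall u in S, forall v in S, ~~ adj u v].

Definition nbr_count (T : finType) (adj : rel T) (S : {set T}) (v : T) : nat :=
  #|[set u in S | adj v u]|.

Definition dominating (T : finType) (adj : rel T) (S : {set T}) : bool :=
  [forall v in ~: S, 1 <= nbr_count adj S v].

Definition indep12 (T : finType) (adj : rel T) (S : {set T}) : bool :=
  [&& independent adj S, dominating adj S &
      [forall v in ~: S, (1 <= nbr_count adj S v) && (nbr_count adj S v <= 2)]].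

Definition indep12_number_is (T : finType) (adj : rel T) (k : nat) : Prop :=
  (exists S : {set T}, indep12 adj S /\ #|S| = k) /\
  (forall S : {set T}, indep12 adj S -> k <= #|S|).

(* Encode a subset S of P_m [] P_n column by column: column j becomes the code
   c_j whose bit i records whether (i, j) lies in S.  Being an independent
   [1,2]-set is a local property, so it holds iff every window
   (c_(j-1), c_j, c_(j+1)) passes a fixed test (with empty columns beyond both
   ends), and |S| is the total popcount of the codes.

   For m = 5 the upper bound comes from explicit code words: a block of 10
   columns of weight 12 can be repeated, so finitely many words cover all
   n >= 5.  For the lower bound, every pair (a, b) of consecutive codes gets a
   potential such that an admissible step (a, b) -> (b, c) lowers it by at most
   5 popcount(b) - 6.  The walk starts at potential 6 and ends, at the right
   border, at potential at least 10, hence 6 n + 4 <= 5 |S|.  The first five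
   columns need potentials of their own; all potentials are produced by a
   min-plus dynamic program, and only their defining inequalities are checked
   by computation. *)

From mathcomp Require Import all_boot zify.
Set Implicit Arguments. Unset Strict Implicit. Unset Printing Implicit Defensive.

(* Independence is only tested towards the right and lower neighbours; every
   edge is then tested at its left or upper end. *)
Definition cell_ok (s r d l u : bool) : bool :=
  [&& ~~ (s && r), ~~ (s && d) & s || (0 < r + d + l + u <= 2)].

Definition nat_bit (x i : nat) : bool := odd (x %/ 2 ^ i).

Definition bits_val (s : seq bool) : nat := foldr (fun (b : bool) x => b + x.*2) 0 s.

Lemma nat_bit0 i : nat_bit 0 i = false.
Proof. by rewrite /nat_bit div0n. Qed.

Lemma nat_bit_bits_val s i : nat_bit (bits_val s) i = nth false s i.
Proof.
elim: s i => [|b s IHs] [|i] /=; rewrite ?nat_bit0 ?nth_nil //.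
  by rewrite /nat_bit divn1 oddD odd_double addbF; case: b.
by rewrite /nat_bit expnS divnMA divn2 half_bit_double; apply: IHs.
Qed.

Lemma bits_val_lt s : bits_val s < 2 ^ size s.
Proof. by elim: s => [|b s IHs] //=; rewrite expnS; case: b; lia. Qed.

Definition popcount (m x : nat) : nat := count (nat_bit x) (iota 0 m).

Lemma popcountE m x : popcount m x = \sum_(i < m) nat_bit x i.
Proof. by rewrite /popcount -sumn_count sumnE big_map -{1}(subn0 m) big_mkord. Qed.

(* [a], [b], [c] are the codes of three consecutive columns of height [m]. *)
Definition code_ok (m a b c : nat) : bool :=
  all (fun i => cell_ok (nat_bit b i) (nat_bit c i) ((i.+1 < m) && nat_bit b i.+1)
                        (nat_bit a i) ((0 < i) && nat_bit b i.-1)) (iota 0 m).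

(* The column left of [w] has code [a], the one right of it code [0]. *)
Fixpoint word_ok (m a : nat) (w : seq nat) : bool :=
  if w is b :: w' then code_ok m a b (head 0 w') && word_ok m b w' else true.

Lemma word_okP m a w :
  reflect (forall j, j < size w -> code_ok m (nth 0 (a :: w) j) (nth 0 w j) (nth 0 w j.+1))
          (word_ok m a w).
Proof.
elim: w a => [|b w IHw] a /=; first by constructor.
apply: (iffP andP) => [[ok_b /IHw ok_w] [|j] /= lt_j | ok_bw].
- by rewrite nth0.
- exact: ok_w.
- split; first by rewrite -nth0; apply: (ok_bw 0).
  by apply/IHw => j lt_j; apply: (ok_bw j.+1).
Qed.

Definition weight (m : nat) (w : seq nat) : nat := sumn (map (popcount m) w).

Section GridCells.
Variables m n : nat.
Implicit Types (S : {set 'I_m * 'I_n}) (u v : 'I_m * 'I_n) (p : nat * nat).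

Definition pos u : nat * nat := (nat_of_ord u.1, nat_of_ord u.2).

Lemma pos_inj : injective pos.
Proof. by move=> [i j] [i' j'] [/val_inj-> /val_inj->]. Qed.

Definition cell S p : bool := [exists u in S, pos u == p].

Lemma cell_pos S u : cell S (pos u) = (u \in S).
Proof.
apply/existsP/idP => [[w /andP [wS /eqP /pos_inj <-]] // | uS].
by exists u; rewrite uS eqxx.
Qed.

Lemma cell_out S i j : (m <= i) || (n <= j) -> cell S (i, j) = false.
Proof.
move=> out; apply/negbTE/existsP => -[[a b] /andP [_ /eqP [ea eb]]].
by move: out (ltn_ord a) (ltn_ord b); rewrite ea eb; lia.
Qed.

Definition fwd_nbrs p : seq (nat * nat) := [:: (p.1, p.2.+1); (p.1.+1, p.2)].

Definition grid_nbrs p : seq (nat * nat) :=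
  fwd_nbrs p ++
  (if p.2 is j.+1 then [:: (p.1, j)] else [::]) ++
  (if p.1 is i.+1 then [:: (i, p.2)] else [::]).

Lemma grid_adjE u v : grid_adj m n u v = (pos v \in grid_nbrs (pos u)).
Proof.
case: u v => [[i hi] [j hj]] [[i' hi'] [j' hj']].
rewrite /grid_adj /grid_nbrs -!val_eqE /=.
by case: i {hi} => [|i]; case: j {hj} => [|j]; rewrite !inE !xpair_eqE /=;
  apply/idP/idP; lia.
Qed.

Lemma uniq_grid_nbrs p : uniq (grid_nbrs p).
Proof.
by case: p => [[|i] [|j]]; rewrite /grid_nbrs /= ?inE ?xpair_eqE; lia.
Qed.

Lemma mem_grid_nbrs p q :
  (q \in grid_nbrs p) = (q \in fwd_nbrs p) || (p \in fwd_nbrs q).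
Proof.
by case: p q => [[|i] [|j]] [i' j']; rewrite /grid_nbrs /fwd_nbrs /= !inE !xpair_eqE /=;
  apply/idP/idP; lia.
Qed.

Lemma cellP S p : reflect (exists2 u, u \in S & pos u = p) (cell S p).
Proof.
apply: (iffP existsP) => -[u]; first by case/andP => uS /eqP; exists u.
by move=> uS <-; exists u; rewrite uS eqxx.
Qed.

Lemma sum_in_pos S p : \sum_(u in S) (pos u == p) = cell S p.
Proof.
have [/existsP [u0 /andP [u0S /eqP <-]] | /existsP nS] := boolP (cell S p).
  rewrite (bigD1 u0) //= eqxx big1 // => u /andP [_ ne].
  by rewrite (inj_eq pos_inj) (negbTE ne).
rewrite big1 // => u uS; apply/eqP; rewrite eqb0; apply/negP => up.
by apply: nS; exists u; rewrite uS.
Qed.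

Lemma nbr_countE S v :
  nbr_count (grid_adj m n) S v = \sum_(p <- grid_nbrs (pos v)) cell S p.
Proof.
have count_nbrs u : \sum_(p <- grid_nbrs (pos v)) (pos u == p) = grid_adj m n v u.
  rewrite grid_adjE -(count_uniq_mem _ (uniq_grid_nbrs _)) -sum1_count [RHS]big_mkcond /=.
  by apply: eq_bigr => p _; rewrite eq_sym; case: eqP.
under eq_bigr => p _ do rewrite -sum_in_pos.
rewrite exchange_big /= /nbr_count -sum1_card.
rewrite [LHS](eq_bigl (fun u => (u \in S) && grid_adj m n v u)); last by move=> u; rewrite !inE.
by rewrite big_mkcondr; apply: eq_bigr => u _; rewrite count_nbrs; case: grid_adj.
Qed.

Definition local_ok S i j : bool :=
  cell_ok (cell S (i, j)) (cell S (i, j.+1)) (cell S (i.+1, j))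
          ((0 < j) && cell S (i, j.-1)) ((0 < i) && cell S (i.-1, j)).

Lemma sum_grid_nbrs S i j :
  \sum_(p <- grid_nbrs (i, j)) cell S p =
  cell S (i, j.+1) + cell S (i.+1, j) + ((0 < j) && cell S (i, j.-1))
  + ((0 < i) && cell S (i.-1, j)).
Proof.
by case: i => [|i]; case: j => [|j]; rewrite /grid_nbrs /= !big_cons big_nil ?addn0 ?addnA.
Qed.

Lemma local_ok_fwd S i j q :
  local_ok S i j -> q \in fwd_nbrs (i, j) -> ~~ (cell S (i, j) && cell S q).
Proof. by case/and3P => right_ok down_ok _; rewrite !inE => /orP [] /eqP ->. Qed.

Lemma indep12_cells S :
  indep12 (grid_adj m n) S <-> forall i j, i < m -> j < n -> local_ok S i j.
Proof.
split=> [/and3P [/forall_inP indS _ /forall_inP deg12] i j hi hj | loc].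
  pose v : 'I_m * 'I_n := (Ordinal hi, Ordinal hj).
  have cell_v : cell S (i, j) = (v \in S) by rewrite -cell_pos.
  have fwd_free q : q \in fwd_nbrs (i, j) -> ~~ (cell S (i, j) && cell S q).
    move=> hq; apply/negP => /andP []; rewrite cell_v => vS /cellP [u uS pu].
    move/forall_inP: (indS v vS) => /(_ u uS).
    by rewrite grid_adjE pu mem_grid_nbrs hq.
  rewrite /local_ok /cell_ok !fwd_free ?inE ?eqxx ?orbT //=.
  case: (boolP (v \in S)) => [vS | nvS]; first by rewrite cell_v vS.
  have := deg12 v; rewrite in_setC nvS nbr_countE sum_grid_nbrs => /(_ isT).
  by rewrite cell_v (negbTE nvS).
have loc_v v : local_ok S v.1 v.2 by apply: loc.
have deg12 v : v \in ~: S -> 0 < nbr_count (grid_adj m n) S v <= 2.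
  rewrite in_setC -cell_pos => /negbTE nvS.
  by case/and3P: (loc_v v) => _ _; rewrite nbr_countE sum_grid_nbrs nvS.
apply/and3P; split.
- apply/forall_inP => u uS; apply/forall_inP => w wS; apply/negP.
  rewrite grid_adjE mem_grid_nbrs => /orP [] fwd.
    by move: (local_ok_fwd (loc_v u) fwd); rewrite -[(_, _)]/(pos u) !cell_pos uS wS.
  by move: (local_ok_fwd (loc_v w) fwd); rewrite -[(_, _)]/(pos w) !cell_pos uS wS.
- by apply/forall_inP => v /deg12 /andP [].
- exact/forall_inP.
Qed.

Definition encodes S (w : seq nat) : Prop :=
  size w = n /\ forall i j, i < m -> cell S (i, j) = nat_bit (nth 0 w j) i.

Lemma local_ok_encoded S w i j : encodes S w -> i < m ->
  local_ok S i j =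
  cell_ok (nat_bit (nth 0 w j) i) (nat_bit (nth 0 w j.+1) i)
          ((i.+1 < m) && nat_bit (nth 0 w j) i.+1) (nat_bit (nth 0 (0 :: w) j) i)
          ((0 < i) && nat_bit (nth 0 w j) i.-1).
Proof.
case=> _ enc lt_im.
have down : cell S (i.+1, j) = (i.+1 < m) && nat_bit (nth 0 w j) i.+1.
  by case: ltnP => [/enc // | ge_m]; rewrite cell_out ?ge_m.
have left : (0 < j) && cell S (i, j.-1) = nat_bit (nth 0 (0 :: w) j) i.
  by case: (j) => [|j']; rewrite /= ?nat_bit0 ?enc.
have up : (0 < i) && cell S (i.-1, j) = (0 < i) && nat_bit (nth 0 w j) i.-1.
  by case: (posnP i) => [-> // | i_gt0]; rewrite enc //; lia.
by rewrite /local_ok down left up !enc.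
Qed.

Lemma indep12_encoded S w : encodes S w -> indep12 (grid_adj m n) S = word_ok m 0 w.
Proof.
move=> enc; have [sz _] := enc.
apply/idP/word_okP => [/indep12_cells loc j lt_jw | ok].
  apply/allP => i; rewrite mem_iota add0n => lt_im.
  by rewrite -(local_ok_encoded _ enc) // loc // -sz.
apply/indep12_cells => i j lt_im lt_jn; rewrite (local_ok_encoded _ enc) //.
have lt_jw : j < size w by rewrite sz.
by move/allP: (ok j lt_jw); apply; rewrite mem_iota.
Qed.

Lemma card_encoded S w : encodes S w -> #|S| = weight m w.
Proof.
case=> sz enc.
have -> : #|S| = \sum_(u : 'I_m * 'I_n) cell S (pos u).
  by rewrite -sum1_card big_mkcond; apply: eq_bigr => u _; rewrite cell_pos; case: (u \in S).
rewrite -(pair_bigA _ (fun (i : 'I_m) (j : 'I_n) => nat_of_bool (cell S (i : nat, j : nat)))).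
rewrite exchange_big /weight sumnE big_map (big_nth 0) sz big_mkord.
by apply: eq_bigr => j _; rewrite popcountE; apply: eq_bigr => i _; rewrite enc.
Qed.

Definition column_code S j : nat := bits_val (mkseq (fun i => cell S (i, j)) m).

Definition word_of S : seq nat := mkseq (column_code S) n.

Lemma word_of_encodes S : encodes S (word_of S).
Proof.
split=> [|i j lt_im]; first by rewrite size_mkseq.
case: (ltnP j n) => [lt_jn | ge_jn]; last by rewrite nth_default ?size_mkseq // nat_bit0 cell_out ?ge_jn ?orbT.
by rewrite nth_mkseq // /column_code nat_bit_bits_val nth_mkseq.
Qed.

Lemma word_of_lt S : all (fun x => x < 2 ^ m) (word_of S).
Proof.
apply/allP => _ /mapP [j _ ->].
by rewrite /column_code -{2}(size_mkseq (fun i => cell S (i, j)) m) bits_val_lt.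
Qed.

Definition word_set (w : seq nat) : {set 'I_m * 'I_n} :=
  [set u : 'I_m * 'I_n | nat_bit (nth 0 w u.2) u.1].

Lemma word_set_encodes w : size w = n -> encodes (word_set w) w.
Proof.
move=> sz; split=> // i j lt_im.
case: (ltnP j n) => [lt_jn | ge_jn]; last by rewrite nth_default ?sz // nat_bit0 cell_out ?ge_jn ?orbT.
by rewrite -[(i, j)]/(pos (Ordinal lt_im, Ordinal lt_jn)) cell_pos inE.
Qed.

End GridCells.

Definition pot_table := seq (seq (option nat)).

Definition entry (t : pot_table) (a b : nat) : option nat := nth None (nth [::] t a) b.

Definition codes5 : seq nat := iota 0 32.

Definition omin (x y : option nat) : option nat :=
  if x is Some a then Some (if y is Some b then minn a b else a) else y.

Definition advance (valid : nat -> nat -> nat -> bool) (t : pot_table) : pot_table :=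
  [seq [seq foldr omin None
              [seq omap (fun v => v + 5 * popcount 5 b - 6) (entry t a b)
                 | a <- codes5 & valid a b c]
         | c <- codes5] | b <- codes5].

Definition start_table : pot_table :=
  [seq [seq if a == 0 then Some 6 else None | b <- codes5] | a <- codes5].

(* Stage k < 5 holds the least value of 5 weight - 6 k + 6 over admissible
   prefixes of k columns ending in a given state; stage 5 is relaxed to a fixed
   point of the step.  Soundness rests on [certified] alone, so the truncated
   subtraction in [advance] is harmless. *)
Definition potentials : seq pot_table :=
  let V := [seq [seq [seq code_ok 5 a b c | c <- codes5] | b <- codes5] | a <- codes5] in
  let step := advance (fun a b c => nth false (nth [::] (nth [::] V a) b) c) in
  let relax t :=
    let t' := step t in [seq [seq omin (entry t b c) (entry t' b c) | c <- codes5] | b <- codes5] in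
  let stages := traject step start_table 6 in
  rcons (take 5 stages) (iter 5 relax (last start_table stages)).

Definition potential (k : nat) : pot_table := nth [::] potentials (minn k 5).

Definition step_ok (x y : option nat) (w : nat) : bool :=
  if x is Some v then (if y is Some v' then v' + 6 <= v + 5 * w else false) else true.

Definition certified (pot : nat -> pot_table) : bool :=
  [&& all (fun b => entry (pot 0) 0 b == Some 6) codes5,
      all (fun a => all (fun b => all (fun c => code_ok 5 a b c ==>
             all (fun k => step_ok (entry (pot k) a b) (entry (pot k.+1) b c) (popcount 5 b))
                 (iota 0 6)) codes5) codes5) codes5 &
      all (fun a => if entry (pot 5) a 0 is Some v then 10 <= v else true) codes5].

Lemma potential_certified : certified potential.
Proof. by vm_compute. Qed.

Lemma potential_start b : b < 32 -> entry (potential 0) 0 b = Some 6.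
Proof.
case/and3P: potential_certified => /allP start _ _ lt_b.
by apply/eqP/start; rewrite mem_iota.
Qed.

Lemma potential_step k a b c v : a < 32 -> b < 32 -> c < 32 -> code_ok 5 a b c ->
  entry (potential k) a b = Some v ->
  exists2 v', entry (potential k.+1) b c = Some v' & v' + 6 <= v + 5 * popcount 5 b.
Proof.
move=> lt_a lt_b lt_c ok_abc.
have [-> ->] : potential k = potential (minn k 5) /\ potential k.+1 = potential (minn k 5).+1.
  by rewrite /potential; split; congr nth; lia.
case/and3P: potential_certified => _ /allP /(_ a) + _.
rewrite mem_iota => /(_ lt_a) /allP /(_ b); rewrite mem_iota => /(_ lt_b) /allP /(_ c).
rewrite mem_iota => /(_ lt_c); rewrite ok_abc => /allP /(_ (minn k 5)).
rewrite mem_iota => /(_ (ltac:(lia))) + pot_ab; rewrite pot_ab /=.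
by case: (entry _ b c) => [v'|] // le; exists v'.
Qed.

Lemma potential_final a v : a < 32 -> entry (potential 5) a 0 = Some v -> 10 <= v.
Proof.
case/and3P: potential_certified => _ _ /allP final lt_a.
by have := final a; rewrite mem_iota => /(_ lt_a) + pot_a; rewrite pot_a.
Qed.

Lemma all_head (T : Type) (P : pred T) x s : all P (x :: s) -> P (head x s).
Proof. by case: s => [/andP [] | y s /and3P []]. Qed.

Lemma potential_walk k a w v :
  all (fun x => x < 32) (a :: w) -> word_ok 5 a w -> entry (potential k) a (head 0 w) = Some v ->
  exists2 v', entry (potential (k + size w)) (last a w) 0 = Some v'
            & v' + 6 * size w <= v + 5 * weight 5 w.
Proof.
elim: w k a v => [|b w IHw] k a v /=; first by rewrite addn0 => _ _ pot_a; exists v.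
case/and3P => lt_a lt_b lt_w /andP [ok_ab ok_w] pot_ab.
have lt_hd : head 0 w < 32 := all_head (P := fun x => x < 32) (x := 0) lt_w.
have [v1 pot_b le1] := potential_step lt_a lt_b lt_hd ok_ab pot_ab.
have [|v2 pot_end le2] := IHw k.+1 b v1 _ ok_w pot_b; first by rewrite /= lt_b.
by exists v2; [rewrite addnS -addSn | move: le1 le2; rewrite /weight /=; lia].
Qed.

Lemma word_weight_lb w : word_ok 5 0 w -> all (fun x => x < 32) w -> 5 <= size w ->
  6 * size w + 4 <= 5 * weight 5 w.
Proof.
move=> ok_w lt_w ge5.
have lt_hd : head 0 w < 32 := all_head (P := fun x => x < 32) (x := 0) lt_w.
have [|v pot_end le] := potential_walk (k := 0) _ ok_w (potential_start lt_hd); first exact: lt_w.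
have lt_last : last 0 w < 32.
  by have /allP := (lt_w : all (fun x => x < 32) (0 :: w)); apply; apply: mem_last.
have : 10 <= v.
  apply: (potential_final lt_last); rewrite -pot_end /potential; congr (entry (nth _ _ _) _ _); lia.
lia.
Qed.

(* Starts after and ends in the state (1, 8): 10 columns of weight 12. *)
Definition period : seq nat := [:: 2; 16; 5; 16; 2; 8; 1; 20; 1; 8].

Lemma word_ok_pump k w :
  word_ok 5 1 (8 :: flatten (nseq k period) ++ w) = word_ok 5 1 (8 :: w).
Proof. by elim: k => [|k IHk] //=; rewrite -catA -IHk. Qed.

Lemma size_pump k : size (flatten (nseq k period)) = 10 * k.
Proof. by elim: k => [|k IHk] //=; rewrite IHk; lia. Qed.

Lemma weight_cat m u v : weight m (u ++ v) = weight m u + weight m v.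
Proof. by rewrite /weight map_cat sumn_cat. Qed.

Lemma weight_pump k : weight 5 (flatten (nseq k period)) = 12 * k.
Proof. by elim: k => [|k IHk] //; rewrite (weight_cat 5 period) IHk (erefl : weight 5 period = 12); lia. Qed.

Definition tails : seq (seq nat) :=
  [:: [:: 2; 16; 5]; [:: 2; 17; 4; 9]; [:: 2; 16; 5; 8; 18]; [:: 2; 16; 5; 16; 2; 9];
      [:: 2; 16; 5; 8; 2; 16; 5]; [:: 2; 16; 5; 16; 2; 8; 1; 20];
      [:: 2; 16; 5; 8; 2; 16; 5; 8; 18]; [:: 2; 16; 5; 8; 2; 16; 5; 16; 2; 9];
      [:: 2; 16; 5; 8; 2; 16; 5; 8; 2; 16; 5]; [:: 2; 16; 5; 8; 2; 16; 5; 16; 2; 8; 1; 20]].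

Lemma tails_ok r : r < 10 ->
  [/\ word_ok 5 1 (8 :: nth [::] tails r), size (nth [::] tails r) = r + 3
    & weight 5 (nth [::] tails r) = (24 + 6 * r) %/ 5].
Proof. by do 10! case: r => [|r] //. Qed.

Definition grid_word (n : nat) : seq nat :=
  if n == 5 then [:: 4; 17; 4; 17; 4]
  else [:: 20; 1; 8] ++ flatten (nseq ((n - 6) %/ 10) period) ++ nth [::] tails ((n - 6) %% 10).

Lemma grid_word_spec n : 5 <= n ->
  [/\ word_ok 5 0 (grid_word n), size (grid_word n) = n
    & weight 5 (grid_word n) = (6 * n + 8) %/ 5].
Proof.
rewrite /grid_word; case: eqP => [-> // | ne5 ge5].
have [ok_t size_t weight_t] := tails_ok (ltn_pmod (n - 6) (isT : 0 < 10)).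
have n_qr : n = 6 + 10 * ((n - 6) %/ 10) + (n - 6) %% 10 by lia.
move: ((n - 6) %/ 10) ((n - 6) %% 10) n_qr ok_t size_t weight_t => q r -> ok_t size_t weight_t.
split.
- have -> : word_ok 5 0 ([:: 20; 1; 8] ++ flatten (nseq q period) ++ nth [::] tails r)
          = word_ok 5 1 (8 :: flatten (nseq q period) ++ nth [::] tails r) by [].
  by rewrite word_ok_pump.
- by rewrite /= size_cat size_pump size_t; lia.
- by rewrite !weight_cat weight_pump weight_t (erefl : weight 5 [:: 20; 1; 8] = 4); lia.
Qed.

Theorem mainTheorem6 (n : nat) (hn : 5 <= n) :
  indep12_number_is (grid_adj 5 n) ((6 * n + 8) %/ 5).
Proof.
split=> [|S].
  have [ok_w size_w weight_w] := grid_word_spec hn.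
  have enc := word_set_encodes 5 size_w.
  by exists (word_set 5 n (grid_word n)); rewrite (indep12_encoded enc) (card_encoded enc).
have enc := word_of_encodes S; have [size_w _] := enc.
rewrite (indep12_encoded enc) (card_encoded enc) => ok_w.
by have := word_weight_lb ok_w (word_of_lt S); rewrite size_w; lia.
Qed.
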